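(* Let $S\in\mathbb{S}^d_m$, $G\in\mathcal{M}(S)$ and $y\in\mathbb{R}^d$ with $P_G(y)\ne\emptyset$. Then $P_G(y)$ is a convex set if and only if $S(u-v,u-v)=0$ for all $u,v\in P_G(y)$. Consequently, $\Sigma_0(P_G)=\{y\in\Sigma(P_G): P_G(y)\text{ is convex}\}$.
   Context: $\mathbb{S}^d_m$: symmetric invertible $d\times d$ real matrices with exactly $m$ positive eigenvalues; $S(x,y):=\langle x,Sy\rangle$. $G\subset\mathbb{R}^d$ is $S$-monotone if $S(x-y,x-y)\ge0$ for $x,y\in G$; maximal if not a strict subset of another $S$-monotone set; $\mathcal{M}(S)$ is the family of maximal $S$-monotone sets. $P_G(y):=\operatorname{argmax}_{x\in G}(S(x,y)-\frac12S(x,x))$. $\Sigma(P_G):=\{y:P_G(y)\ne\emptyset\text{ and is not a single point}\}$; $\Sigma_0(P_G):=\{y\in\Sigma(P_G):S(y_1-y_2,y_1-y_2)=0\text{ for all }y_1,y_2\in P_G(y)\}$. *)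

From mathcomp Require Import all_boot all_order all_algebra.
From mathcomp Require Import reals.
Set Implicit Arguments. Unset Strict Implicit. Unset Printing Implicit Defensive.
Import Order.TTheory GRing.Theory Num.Theory.
Local Open Scope ring_scope.

Definition Sform (R : realType) (d : nat) (S : 'M[R]_d) (x y : 'cV[R]_d) : R :=
  (x^T *m S *m y) 0 0.

(* S in S^d_m : symmetric, invertible, with exactly m positive eigenvalues
   counted with multiplicity (the eigenvalues of a real symmetric matrix are
   real: the characteristic polynomial splits over R as prod (X - lambda_i)). *)
Definition in_Sdm (R : realType) (d m : nat) (S : 'M[R]_d) : Prop :=
  S^T = S /\ S \in unitmx /\
  exists2 ev : d.-tuple R,
    char_poly S = \prod_(l <- ev) ('X - l%:P)
    & count (fun l => 0 < l) ev = m.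

Definition S_monotone (R : realType) (d : nat) (S : 'M[R]_d)
    (G : 'cV[R]_d -> Prop) : Prop :=
  forall x y, G x -> G y -> 0 <= Sform S (x - y) (x - y).

Definition maximal_S_monotone (R : realType) (d : nat) (S : 'M[R]_d)
    (G : 'cV[R]_d -> Prop) : Prop :=
  S_monotone S G /\
  forall G' : 'cV[R]_d -> Prop, S_monotone S G' ->
    (forall x, G x -> G' x) -> forall x, G' x -> G x.

Definition PG (R : realType) (d : nat) (S : 'M[R]_d) (G : 'cV[R]_d -> Prop)
    (y : 'cV[R]_d) (x : 'cV[R]_d) : Prop :=
  G x /\ forall z, G z ->
    Sform S z y - 2^-1 * Sform S z z <= Sform S x y - 2^-1 * Sform S x x.

Definition nonempty (R : realType) (d : nat) (A : 'cV[R]_d -> Prop) : Prop :=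
  exists x, A x.

Definition convex (R : realType) (d : nat) (A : 'cV[R]_d -> Prop) : Prop :=
  forall u v (t : R), A u -> A v -> 0 <= t -> t <= 1 ->
    A (t *: u + (1 - t) *: v).

Definition Sigma (R : realType) (d : nat) (S : 'M[R]_d) (G : 'cV[R]_d -> Prop)
    (y : 'cV[R]_d) : Prop :=
  nonempty (PG S G y) /\ ~ (exists x, forall z, PG S G y z <-> z = x).

Definition Sigma0 (R : realType) (d : nat) (S : 'M[R]_d) (G : 'cV[R]_d -> Prop)
    (y : 'cV[R]_d) : Prop :=
  Sigma S G y /\
  forall y1 y2, PG S G y y1 -> PG S G y y2 -> Sform S (y1 - y2) (y1 - y2) = 0.

From mathcomp Require Import all_boot all_order all_algebra.
From mathcomp Require Import reals.
From mathcomp Require Import ring lra.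
Import Order.TTheory GRing.Theory Num.Theory.
Set Implicit Arguments. Unset Strict Implicit. Unset Printing Implicit Defensive.
Local Open Scope ring_scope.

(* Write q(x) := S(x,x) and f(x) := S(x,y) - q(x)/2 for the objective of P_G(y).
   For w = t u + (1 - t) v both are "convex up to q(u - v)":
     f(w) = t f(u) + (1 - t) f(v) + t(1 - t) q(u - v) / 2,
     q(w - g) = t q(u - g) + (1 - t) q(v - g) - t(1 - t) q(u - v).
   If P_G(y) is convex, the midpoint of two maximisers u, v is again a
   maximiser, so the first identity forces q(u - v) <= 0, while monotonicity
   of G gives q(u - v) >= 0.  Conversely, if q(u - v) = 0 the second identity
   shows that G together with w is still S-monotone, so w lies in G by
   maximality, and then the first identity makes w a maximiser. *)

Definition Sgain (R : realType) (d : nat) (S : 'M[R]_d) (y x : 'cV[R]_d) : R :=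
  Sform S x y - 2^-1 * Sform S x x.

Section Bilinear.
Variables (R : realType) (d : nat) (S : 'M[R]_d).

Lemma SformDl x1 x2 y : Sform S (x1 + x2) y = Sform S x1 y + Sform S x2 y.
Proof. by rewrite /Sform linearD /= !mulmxDl mxE. Qed.

Lemma SformZl a x y : Sform S (a *: x) y = a * Sform S x y.
Proof. by rewrite /Sform linearZ /= -!scalemxAl mxE. Qed.

Lemma SformDr x y1 y2 : Sform S x (y1 + y2) = Sform S x y1 + Sform S x y2.
Proof. by rewrite /Sform !mulmxDr mxE. Qed.

Lemma SformZr a x y : Sform S x (a *: y) = a * Sform S x y.
Proof. by rewrite /Sform -!scalemxAr mxE. Qed.

Hypothesis S_sym : S^T = S.

Lemma SformC x y : Sform S x y = Sform S y x.
Proof.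
have tr11 (A : 'M[R]_1) : A 0 0 = A^T 0 0 by rewrite mxE.
by rewrite /Sform tr11 !trmx_mul trmxK S_sym mulmxA.
Qed.

Lemma Sform_lincomb s r a b :
  Sform S (s *: a + r *: b) (s *: a + r *: b) =
  s ^+ 2 * Sform S a a + 2 * s * r * Sform S a b + r ^+ 2 * Sform S b b.
Proof. by rewrite !(SformDl, SformDr, SformZl, SformZr) (SformC b a); ring. Qed.

Lemma Sform_sub a b :
  Sform S (a - b) (a - b) = Sform S a a - 2 * Sform S a b + Sform S b b.
Proof.
have -> : a - b = 1 *: a + (-1) *: b by rewrite scale1r scaleN1r.
by rewrite Sform_lincomb; ring.
Qed.

Lemma Sform_subC a b : Sform S (a - b) (a - b) = Sform S (b - a) (b - a).
Proof. by rewrite -opprB -scaleN1r SformZl SformZr; ring. Qed.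

Lemma Sform_convex_comb t a b :
  Sform S (t *: a + (1 - t) *: b) (t *: a + (1 - t) *: b) =
  t * Sform S a a + (1 - t) * Sform S b b - t * (1 - t) * Sform S (a - b) (a - b).
Proof. by rewrite Sform_lincomb Sform_sub; ring. Qed.

Lemma Sform_convex_comb_sub t u v g :
  Sform S (t *: u + (1 - t) *: v - g) (t *: u + (1 - t) *: v - g) =
  t * Sform S (u - g) (u - g) + (1 - t) * Sform S (v - g) (v - g)
  - t * (1 - t) * Sform S (u - v) (u - v).
Proof.
have -> : t *: u + (1 - t) *: v - g = t *: (u - g) + (1 - t) *: (v - g).
  by rewrite !scalerBr addrACA -opprD -scalerDl addrCA subrr addr0 scale1r.
by rewrite Sform_convex_comb opprB addrA subrK.
Qed.

Lemma Sgain_convex_comb y t u v :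
  Sgain S y (t *: u + (1 - t) *: v) =
  t * Sgain S y u + (1 - t) * Sgain S y v
  + 2^-1 * t * (1 - t) * Sform S (u - v) (u - v).
Proof. by rewrite /Sgain Sform_convex_comb SformDl !SformZl; ring. Qed.

End Bilinear.

Section Monotone.
Variables (R : realType) (d : nat) (S : 'M[R]_d) (G : 'cV[R]_d -> Prop).
Hypothesis S_sym : S^T = S.

Lemma S_monotone_add_convex_comb u v t :
  S_monotone S G -> G u -> G v -> Sform S (u - v) (u - v) = 0 ->
  0 <= t -> t <= 1 ->
  S_monotone S (fun x => G x \/ x = t *: u + (1 - t) *: v).
Proof.
move=> Gmon Gu Gv quv t0 t1.
have comb_ge0 g : G g ->
    0 <= Sform S (t *: u + (1 - t) *: v - g) (t *: u + (1 - t) *: v - g).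
  move=> Gg; rewrite Sform_convex_comb_sub // quv.
  by have := Gmon _ _ Gu Gg; have := Gmon _ _ Gv Gg; nra.
move=> x z [Gx|->] [Gz|->].
- exact: Gmon.
- by rewrite Sform_subC //; apply: comb_ge0.
- exact: comb_ge0.
- by rewrite subrr /Sform mulmx0 mxE.
Qed.

Lemma maximal_S_monotone_convex_comb u v t :
  maximal_S_monotone S G -> G u -> G v -> Sform S (u - v) (u - v) = 0 ->
  0 <= t -> t <= 1 -> G (t *: u + (1 - t) *: v).
Proof.
move=> [Gmon Gmax] Gu Gv quv t0 t1.
apply: (Gmax _ (S_monotone_add_convex_comb Gmon Gu Gv quv t0 t1)); last by right.
by move=> x; left.
Qed.

Lemma PG_isotropic_of_midpoint y u v :
  S_monotone S G -> PG S G y u -> PG S G y v ->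
  PG S G y (2^-1 *: u + (1 - 2^-1) *: v) ->
  Sform S (u - v) (u - v) = 0.
Proof.
move=> Gmon [Gu u_max] [Gv v_max] [Gw _].
have := Sgain_convex_comb S_sym y (2^-1) u v; rewrite /Sgain.
have := u_max _ Gw; have := u_max _ Gv; have := v_max _ Gu.
by have := Gmon _ _ Gu Gv; lra.
Qed.

Lemma PG_convex_comb y u v t :
  maximal_S_monotone S G -> PG S G y u -> PG S G y v ->
  Sform S (u - v) (u - v) = 0 -> 0 <= t -> t <= 1 ->
  PG S G y (t *: u + (1 - t) *: v).
Proof.
move=> Gmax [Gu u_max] [Gv v_max] quv t0 t1.
split; first exact: maximal_S_monotone_convex_comb.
move=> z Gz; have := Sgain_convex_comb S_sym y t u v; rewrite /Sgain quv.
by have := u_max _ Gz; have := u_max _ Gv; have := v_max _ Gu; nra.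
Qed.

Lemma PG_convexP y :
  maximal_S_monotone S G ->
  convex (PG S G y) <->
  forall u v, PG S G y u -> PG S G y v -> Sform S (u - v) (u - v) = 0.
Proof.
move=> Gmax; split=> [PGconv u v Pu Pv | iso u v t Pu Pv t0 t1].
- have half_ge0 : (0 : R) <= 2^-1 by rewrite invr_ge0.
  have half_le1 : (2^-1 : R) <= 1 by rewrite invf_le1 // ler1n.
  exact: PG_isotropic_of_midpoint Gmax.1 Pu Pv (PGconv _ _ _ Pu Pv half_ge0 half_le1).
- exact: PG_convex_comb Gmax Pu Pv (iso _ _ Pu Pv) t0 t1.
Qed.

End Monotone.

Theorem lemma3 (R : realType) (d m : nat) (S : 'M[R]_d)
    (G : 'cV[R]_d -> Prop) :
  in_Sdm m S -> maximal_S_monotone S G ->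
  (forall y : 'cV[R]_d, nonempty (PG S G y) ->
     (convex (PG S G y) <->
      forall u v, PG S G y u -> PG S G y v -> Sform S (u - v) (u - v) = 0)) /\
  (forall y : 'cV[R]_d, Sigma0 S G y <-> (Sigma S G y /\ convex (PG S G y))).
Proof.
move=> [S_sym _] Gmax.
have convexP y := PG_convexP S_sym y Gmax.
split=> [y _ | y]; first exact: convexP.
by split=> -[Sy H]; split=> //; apply/convexP.
Qed.
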